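(* (1) For all $j\in\mathbb Z\cup\{\infty\}$ the first coordinate $x:\mathbb R^2\to\mathbb R$ descends to $x_j:X_j\to\mathbb R$ (i.e. $x=x_j\circ\hat\pi^j$), and for $j\in\mathbb Z$ the map $\hat y_j:\mathbb R^2\to S^1(m_v^{-j})$, $\hat y_j(x,y)=y\bmod m_v^{-j}$, descends to $y_j:X_j\to S^1(m_v^{-j})$. (2) If $\sigma$ is a $2$-cell of $X_j$, then $x_j(\sigma)$ is an interval of length $m^{-j}$ whose endpoints are the images of the two vertical $1$-cells of $\sigma$. (3) If $p,p'\in X_j$ and $\pi_j(p)=\pi_j(p')$, then $d_{S^1}(y_j(p),y_j(p'))\le2m_v^{-(j+1)}$. (4) If $\bar\sigma$ is a $2$-cell of $X_{j+1}$, then $y_j(\pi_j^{-1}(\bar\sigma))$ has diameter at most $5m_v^{-(j+1)}$.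
   Context: Standing construction ($n=2$). Fix an integer $L\ge100$, $m=4$, $m_v=3L$. For $j\in\mathbb Z$, $Y_j$ is the cell complex on $\mathbb R^2$ given by the tiling by rectangles $[am^{-j},(a+1)m^{-j}]\times[bm_v^{-j},(b+1)m_v^{-j}]$, $a,b\in\mathbb Z$; a $1$-cell of $Y_j$ is vertical if it is a translate of $\{0\}\times[0,m_v^{-j}]$. Let $\Phi(x,y)=(m^{-1}x,m_v^{-1}y)$. For $k,\ell\in\mathbb Z$, $i\in\{1,2,3\}$, let $a_{k,\ell,i}=\{k+\tfrac i4\}\times[(3\ell+i-1)m_v^{-1},(3\ell+i)m_v^{-1}]$. $\mathcal R$ is the equivalence relation on $\mathbb R^2$ generated by $p\sim p+(0,m_v^{-1})$ for $p\in a_{k,\ell,i}$. $\Phi^j_*\mathcal R=\{(\Phi^jp,\Phi^jq):(p,q)\in\mathcal R\}$; $\mathcal R_j$ is generated by $\Phi^i_*\mathcal R$, $i<j$; $\mathcal R_\infty$ by all of them. For $j\in\mathbb Z\cup\{\infty\}$, $X_j=\mathbb R^2/\mathcal R_j$, $\hat\pi^j$ the quotient map, $\pi_j:X_j\to X_{j+1}$ induced map. $X_j$ carries the CW structure whose open cells are images under $\hat\pi^j$ of open cells of $Y_j$ (vertical cells are images of vertical cells). $S^1(r)=\mathbb R/r\mathbb Z$ with the quotient metric $d_{S^1}$. *)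

From Stdlib Require Import Reals ZArith Relations.
Open Scope R_scope.

Definition pt := (R * R)%type.

Definition mm : R := 4.
Definition mv (L : nat) : R := 3 * INR L.

Definition Phi (L : nat) (j : Z) (p : pt) : pt :=
  (powerRZ mm (- j) * fst p, powerRZ (mv L) (- j) * snd p).

Definition baseR (L : nat) (p q : pt) : Prop :=
  exists (k l i : Z), (1 <= i <= 3)%Z /\
    fst p = IZR k + IZR i / 4 /\
    (3 * IZR l + IZR i - 1) / mv L <= snd p <= (3 * IZR l + IZR i) / mv L /\
    q = (fst p, snd p + / mv L).

Definition RelR (L : nat) : relation pt := clos_refl_sym_trans pt (baseR L).

Definition pushR (L : nat) (j : Z) (p q : pt) : Prop :=
  exists p0 q0, RelR L p0 q0 /\ p = Phi L j p0 /\ q = Phi L j q0.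

(* j in Z ∪ {∞} is encoded as option Z, None = ∞.
   R_j generated by Phi^i_* R, i < j; R_∞ by all of them. *)
Definition Rj (L : nat) (J : option Z) : relation pt :=
  clos_refl_sym_trans pt (fun p q => exists i : Z,
    match J with Some j => (i < j)%Z | None => True end /\ pushR L i p q).

Definition eqmod (r s t : R) : Prop := exists k : Z, s - t = IZR k * r.

(* quotient metric on S^1(r) = R / rZ, on representatives *)
Definition dS1 (r s t : R) : R :=
  r * Rmin (frac_part ((s - t) / r)) (1 - frac_part ((s - t) / r)).

(* Saturation of a set of R^2 under R_j: represents the image \hat\pi^j(S) in X_j
   (as an R_j-saturated subset of R^2). *)
Definition sat (L : nat) (J : option Z) (S : pt -> Prop) (p : pt) : Prop :=
  exists q, S q /\ Rj L J p q.

Definition ximg (S : pt -> Prop) (t : R) : Prop := exists p, S p /\ fst p = t.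

Definition open_cell (L : nat) (j a b : Z) (p : pt) : Prop :=
  IZR a * powerRZ mm (- j) < fst p < (IZR a + 1) * powerRZ mm (- j) /\
  IZR b * powerRZ (mv L) (- j) < snd p < (IZR b + 1) * powerRZ (mv L) (- j).

Definition closed_cell (L : nat) (j a b : Z) (p : pt) : Prop :=
  IZR a * powerRZ mm (- j) <= fst p <= (IZR a + 1) * powerRZ mm (- j) /\
  IZR b * powerRZ (mv L) (- j) <= snd p <= (IZR b + 1) * powerRZ (mv L) (- j).

Definition vert_cell (L : nat) (j c b : Z) (p : pt) : Prop :=
  fst p = IZR c * powerRZ mm (- j) /\
  IZR b * powerRZ (mv L) (- j) <= snd p <= (IZR b + 1) * powerRZ (mv L) (- j).

(* The x-coordinate is preserved by every generating pair, and the generators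
   of level i < j move points vertically by multiples of m_v^{-(i+1)}, hence
   of m_v^{-j}; this gives (1), and (2) follows because saturation does not
   change x-images.  For (3) and (4) one builds a level-j representative of
   the height, [yrep j], that is invariant modulo m_v^{-j} under R_{j+1}: on
   each glued vertical line of Phi^j_* R it lowers y by 0, 1 or 2 steps of
   m_v^{-(j+1)} to the bottom of its gluing class, and elsewhere it is y.
   Since y and [yrep j] differ by at most 2 m_v^{-(j+1)}, two points of one
   class of R_{j+1} have y-values within 2 m_v^{-(j+1)} modulo m_v^{-j};
   for (4) the open cell adds its height m_v^{-(j+1)} and the 2 steps at
   each of the two ends. *)
From Stdlib Require Import Reals ZArith Relations RelationClasses Lra Lia.
Open Scope R_scope.

Lemma clos_rst_preserved {A B : Type} (R : relation A) (E : relation B)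
  `{Equivalence B E} (f : A -> B) :
  (forall a b, R a b -> E (f a) (f b)) ->
  forall a b, clos_refl_sym_trans A R a b -> E (f a) (f b).
Proof.
  intros HR a b Hab.
  induction Hab; [auto | reflexivity | symmetry; assumption | etransitivity; eassumption].
Qed.

#[export] Instance eqmod_Equivalence (r : R) : Equivalence (eqmod r).
Proof.
  split.
  - intro s. exists 0%Z. ring.
  - intros s t [K HK]. exists (- K)%Z. rewrite opp_IZR. lra.
  - intros s t u [K1 H1] [K2 H2]. exists (K1 + K2)%Z. rewrite plus_IZR. lra.
Qed.

Lemma eqmod_scale (c r s t : R) : eqmod r s t -> eqmod (c * r) (c * s) (c * t).
Proof. intros [K HK]. exists K. rewrite <- Rmult_minus_distr_l, HK. ring. Qed.

Lemma eqmod_coarsen (M : Z) (r s t : R) : eqmod (IZR M * r) s t -> eqmod r s t.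
Proof. intros [K HK]. exists (K * M)%Z. rewrite HK, mult_IZR. ring. Qed.

Lemma dS1_le (r s t : R) (K : Z) : 0 < r -> dS1 r s t <= Rabs (s - t - IZR K * r).
Proof.
  intro Hr. unfold dS1, frac_part. set (z := (s - t) / r).
  destruct (base_Int_part z) as [B1 B2].
  replace (s - t - IZR K * r) with (r * (z - IZR K)) by (unfold z; field; lra).
  rewrite Rabs_mult, (Rabs_right r) by lra.
  apply Rmult_le_compat_l; [lra|].
  destruct (Z_le_gt_dec K (Int_part z)) as [HK|HK].
  - apply IZR_le in HK. eapply Rle_trans; [apply Rmin_l|]. rewrite Rabs_right; lra.
  - assert (HK' : (Int_part z + 1 <= K)%Z) by lia. apply IZR_le in HK'.
    rewrite plus_IZR in HK'.
    eapply Rle_trans; [apply Rmin_r|]. rewrite Rabs_left1; lra.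
Qed.

Lemma powerRZ_opp_succ (x : R) (j : Z) : x <> 0 -> powerRZ x (- (j + 1)) = powerRZ x (- j) / x.
Proof.
  intro Hx. replace (- (j + 1))%Z with (- j + - 1)%Z by lia.
  rewrite powerRZ_add by exact Hx. simpl. field. exact Hx.
Qed.

Lemma powerRZ_opp_mul_succ (x : R) (j : Z) : x <> 0 -> powerRZ x (- j) * powerRZ x (j + 1) = x.
Proof.
  intro Hx. rewrite <- powerRZ_add by exact Hx.
  replace (- j + (j + 1))%Z with 1%Z by lia. simpl. ring.
Qed.

Lemma powerRZ_IZR_opp_succ_lt (n i j : Z) : n <> 0%Z -> (i < j)%Z ->
  powerRZ (IZR n) (- (i + 1)) = IZR (n ^ (j - i - 1)) * powerRZ (IZR n) (- j).
Proof.
  intros Hn Hij. assert (Hn' : IZR n <> 0) by (apply not_0_IZR; exact Hn).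
  rewrite <- (Z2Nat.id (j - i - 1)) by lia.
  rewrite <- pow_IZR, pow_powerRZ, <- powerRZ_add by exact Hn'.
  f_equal. lia.
Qed.

Lemma Int_part_eq (x : R) (n : Z) : IZR n <= x < IZR n + 1 -> Int_part x = n.
Proof.
  intros [H1 H2]. destruct (base_Int_part x) as [B1 B2].
  assert (A1 : IZR (n - Int_part x) < 1) by (rewrite minus_IZR; lra).
  assert (A2 : -1 < IZR (n - Int_part x)) by (rewrite minus_IZR; lra).
  apply lt_IZR in A1. apply lt_IZR in A2. lia.
Qed.

Lemma Int_part_IZR (n : Z) : Int_part (IZR n) = n.
Proof. apply Int_part_eq. lra. Qed.

Lemma Int_part_add_IZR (x : R) (n : Z) : Int_part (x + IZR n) = (Int_part x + n)%Z.
Proof. apply Int_part_eq. destruct (base_Int_part x). rewrite plus_IZR. lra. Qed.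

Definition mod3 (s : R) : R := s - 3 * IZR (Int_part (s / 3)).

Lemma mod3_add (s : R) (n : Z) : mod3 (s + 3 * IZR n) = mod3 s.
Proof.
  unfold mod3. replace ((s + 3 * IZR n) / 3) with (s / 3 + IZR n) by field.
  rewrite Int_part_add_IZR, plus_IZR. ring.
Qed.

Lemma mod3_eq (s : R) (l : Z) : 3 * IZR l <= s < 3 * IZR l + 3 -> mod3 s = s - 3 * IZR l.
Proof. intro Hs. unfold mod3. rewrite (Int_part_eq _ l); [reflexivity | lra]. Qed.

(* A gluing class on a line, in units of m_v^{-(j+1)} and modulo 3, is
   {t, t + 1} for 0 < t < 1, {0, 1, 2}, or {t} for 2 < t < 3; [fold_offset t] is the distance
   from t down to the least element of its class. *)
Definition fold_offset (t : R) : R :=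
  if Rlt_dec t 1 then 0 else if Rlt_dec t 2 then 1
  else if Req_dec_T t 2 then 2 else 0.

Lemma fold_offset_range (t : R) : 0 <= fold_offset t <= 2.
Proof. unfold fold_offset. repeat destruct Rlt_dec; try destruct Req_dec_T; lra. Qed.

Lemma fold_offset_succ (t : R) : 0 <= t <= 1 -> fold_offset (t + 1) = fold_offset t + 1.
Proof. intro Ht. unfold fold_offset. repeat destruct Rlt_dec; repeat destruct Req_dec_T; lra. Qed.

(* In the rescaled coordinates (X, Y) = (m^{j+1} x, m_v^{j+1} y) the gluing
   of level j identifies, on the line X = 4k + i with i = 1, 2, 3, the
   segment 3l + i - 1 <= Y <= 3l + i with its translate by 1.  On the
   unglued integer lines X = 4k the value is irrelevant, only its range matters. *)
Definition offset (X Y : R) : R :=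
  if Req_dec_T X (IZR (Int_part X))
  then fold_offset (mod3 (Y - IZR (Int_part X mod 4 - 1))) else 0.

Lemma offset_range (X Y : R) : 0 <= offset X Y <= 2.
Proof. unfold offset. destruct Req_dec_T; [apply fold_offset_range | lra]. Qed.

Lemma offset_add3 (X Y : R) (n : Z) : offset X (Y + 3 * IZR n) = offset X Y.
Proof.
  unfold offset. destruct Req_dec_T; [|reflexivity].
  replace (Y + 3 * IZR n - IZR (Int_part X mod 4 - 1))
    with (Y - IZR (Int_part X mod 4 - 1) + 3 * IZR n) by ring.
  rewrite mod3_add. reflexivity.
Qed.

Lemma offset_glue (k l i : Z) (Y : R) : (1 <= i <= 3)%Z ->
  3 * IZR l + IZR i - 1 <= Y <= 3 * IZR l + IZR i ->
  offset (IZR (4 * k + i)) (Y + 1) = offset (IZR (4 * k + i)) Y + 1.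
Proof.
  intros Hi HY. unfold offset. rewrite Int_part_IZR.
  destruct Req_dec_T as [_|C]; [|contradiction C; reflexivity].
  replace ((4 * k + i) mod 4)%Z with i
    by (rewrite Z.add_comm, Z.mul_comm, Z.mod_add by lia; symmetry; apply Z.mod_small; lia).
  rewrite minus_IZR, !(mod3_eq _ l) by lra.
  replace (Y + 1 - (IZR i - IZR 1) - 3 * IZR l)
    with (Y - (IZR i - IZR 1) - 3 * IZR l + 1) by ring.
  apply fold_offset_succ. simpl. lra.
Qed.

Section Tower.

Variable L : nat.
Hypothesis HL : (0 < L)%nat.

Lemma mv_pos : 0 < mv L.
Proof. unfold mv. apply lt_INR in HL. simpl in HL. lra. Qed.

Lemma mv_neq0 : mv L <> 0.
Proof. apply Rgt_not_eq, mv_pos. Qed.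

Lemma powerRZ_mv_pos (j : Z) : 0 < powerRZ (mv L) j.
Proof. apply powerRZ_lt, mv_pos. Qed.

Lemma powerRZ_mv_opp_succ_lt (i j : Z) : (i < j)%Z ->
  exists M : Z, powerRZ (mv L) (- (i + 1)) = IZR M * powerRZ (mv L) (- j).
Proof.
  intro Hij. assert (Hmv : mv L = IZR (3 * Z.of_nat L))
    by (unfold mv; rewrite mult_IZR, INR_IZR_INZ; reflexivity).
  rewrite Hmv. eexists. apply powerRZ_IZR_opp_succ_lt; [lia | exact Hij].
Qed.

Lemma relR_fst (p q : pt) : RelR L p q -> fst p = fst q.
Proof.
  apply (clos_rst_preserved _ eq fst).
  intros a b (k & l & i & _ & _ & _ & ->). reflexivity.
Qed.

Lemma relR_eqmod (p q : pt) : RelR L p q -> eqmod (/ mv L) (snd p) (snd q).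
Proof.
  apply (clos_rst_preserved _ (eqmod (/ mv L)) snd).
  intros a b (k & l & i & _ & _ & _ & ->). exists (-1)%Z. simpl. ring.
Qed.

Lemma pushR_fst (i : Z) (p q : pt) : pushR L i p q -> fst p = fst q.
Proof. intros (p0 & q0 & HR & -> & ->). simpl. rewrite (relR_fst _ _ HR). reflexivity. Qed.

Lemma pushR_eqmod (i : Z) (p q : pt) :
  pushR L i p q -> eqmod (powerRZ (mv L) (- (i + 1))) (snd p) (snd q).
Proof.
  intros (p0 & q0 & HR & -> & ->). simpl.
  rewrite powerRZ_opp_succ by exact mv_neq0.
  apply eqmod_scale, relR_eqmod, HR.
Qed.

Lemma pushR_eqmod_lt (i j : Z) (p q : pt) : (i < j)%Z ->
  pushR L i p q -> eqmod (powerRZ (mv L) (- j)) (snd p) (snd q).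
Proof.
  intros Hij H. destruct (powerRZ_mv_opp_succ_lt i j Hij) as [M HM].
  apply (eqmod_coarsen M). rewrite <- HM. exact (pushR_eqmod i p q H).
Qed.

Lemma Rj_fst (J : option Z) (p q : pt) : Rj L J p q -> fst p = fst q.
Proof. apply (clos_rst_preserved _ eq fst). intros a b [i [_ H]]. exact (pushR_fst i a b H). Qed.

Lemma Rj_eqmod (j : Z) (p q : pt) :
  Rj L (Some j) p q -> eqmod (powerRZ (mv L) (- j)) (snd p) (snd q).
Proof.
  apply (clos_rst_preserved _ _ snd). intros a b [i [Hij H]].
  exact (pushR_eqmod_lt i j a b Hij H).
Qed.

Definition level_offset (j : Z) (p : pt) : R :=
  offset (fst p * powerRZ mm (j + 1)) (snd p * powerRZ (mv L) (j + 1)).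

Lemma level_offset_range (j : Z) (p : pt) : 0 <= level_offset j p <= 2.
Proof. apply offset_range. Qed.

Definition yrep (j : Z) (p : pt) : R :=
  snd p - level_offset j p * powerRZ (mv L) (- (j + 1)).

Lemma yrep_eqmod (j : Z) (p q : pt) : fst p = fst q ->
  eqmod (powerRZ (mv L) (- j)) (snd p) (snd q) ->
  eqmod (powerRZ (mv L) (- j)) (yrep j p) (yrep j q).
Proof.
  intros Hx [K HK].
  assert (Hoff : level_offset j p = level_offset j q).
  { unfold level_offset. rewrite Hx.
    replace (snd p * powerRZ (mv L) (j + 1))
      with (snd q * powerRZ (mv L) (j + 1) + 3 * IZR (K * Z.of_nat L)).
    - apply offset_add3.
    - replace (snd p) with (snd q + IZR K * powerRZ (mv L) (- j)) by lra.
      rewrite Rmult_plus_distr_r, Rmult_assoc, powerRZ_opp_mul_succ by exact mv_neq0.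
      rewrite mult_IZR, <- INR_IZR_INZ. unfold mv. ring. }
  exists K. unfold yrep. rewrite Hoff. lra.
Qed.

Lemma level_offset_Phi (j : Z) (p : pt) :
  level_offset j (Phi L j p) = offset (4 * fst p) (mv L * snd p).
Proof.
  unfold level_offset, Phi. simpl. f_equal.
  - rewrite Rmult_comm, <- Rmult_assoc, (Rmult_comm _ (powerRZ mm (- j))).
    rewrite powerRZ_opp_mul_succ by (unfold mm; lra). reflexivity.
  - rewrite Rmult_comm, <- Rmult_assoc, (Rmult_comm _ (powerRZ (mv L) (- j))).
    rewrite powerRZ_opp_mul_succ by exact mv_neq0. reflexivity.
Qed.

Lemma yrep_baseR (j : Z) (p0 q0 : pt) :
  baseR L p0 q0 -> yrep j (Phi L j p0) = yrep j (Phi L j q0).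
Proof.
  intros (k & l & i & Hi & Hx & [Hy1 Hy2] & ->).
  pose proof mv_pos as Hmv.
  assert (HX : 4 * fst p0 = IZR (4 * k + i)) by (rewrite Hx, plus_IZR, mult_IZR; field).
  assert (HY1 : 3 * IZR l + IZR i - 1 <= mv L * snd p0).
  { replace (3 * IZR l + IZR i - 1) with (mv L * ((3 * IZR l + IZR i - 1) / mv L))
      by (field; lra).
    apply Rmult_le_compat_l; lra. }
  assert (HY2 : mv L * snd p0 <= 3 * IZR l + IZR i).
  { replace (3 * IZR l + IZR i) with (mv L * ((3 * IZR l + IZR i) / mv L)) by (field; lra).
    apply Rmult_le_compat_l; lra. }
  unfold yrep. rewrite !level_offset_Phi. simpl. rewrite HX.
  replace (mv L * (snd p0 + / mv L)) with (mv L * snd p0 + 1) by (field; lra).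
  rewrite (offset_glue k l i) by (auto; lra).
  rewrite powerRZ_opp_succ by exact mv_neq0. field. exact mv_neq0.
Qed.

Lemma yrep_relR (j : Z) (p0 q0 : pt) :
  RelR L p0 q0 -> yrep j (Phi L j p0) = yrep j (Phi L j q0).
Proof. apply (clos_rst_preserved _ eq (fun p => yrep j (Phi L j p))), yrep_baseR. Qed.

Lemma Rj_succ_yrep (j : Z) (p q : pt) : Rj L (Some (j + 1)%Z) p q ->
  eqmod (powerRZ (mv L) (- j)) (yrep j p) (yrep j q).
Proof.
  apply (clos_rst_preserved _ _ (yrep j)). intros a b [i [Hij H]].
  destruct (Z.lt_ge_cases i j) as [Hlt | Hge].
  - exact (yrep_eqmod j a b (pushR_fst i a b H) (pushR_eqmod_lt i j a b Hlt H)).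
  - replace i with j in H by lia.
    destruct H as (p0 & q0 & HR & -> & ->). rewrite (yrep_relR j p0 q0 HR). reflexivity.
Qed.

Lemma Rj_succ_dS1 (j : Z) (p p' : pt) : Rj L (Some (j + 1)%Z) p p' ->
  dS1 (powerRZ (mv L) (- j)) (snd p) (snd p') <= 2 * powerRZ (mv L) (- (j + 1)).
Proof.
  intro H. destruct (Rj_succ_yrep j p p' H) as [K HK]. unfold yrep in HK.
  eapply Rle_trans; [apply (dS1_le _ _ _ K), powerRZ_mv_pos|].
  pose proof (level_offset_range j p). pose proof (level_offset_range j p').
  pose proof (powerRZ_mv_pos (- (j + 1))).
  apply Rabs_le. split; nra.
Qed.

Lemma sat_open_cell_dS1 (j a b : Z) (p p' : pt) :
  sat L (Some (j + 1)%Z) (open_cell L (j + 1) a b) p ->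
  sat L (Some (j + 1)%Z) (open_cell L (j + 1) a b) p' ->
  dS1 (powerRZ (mv L) (- j)) (snd p) (snd p') <= 5 * powerRZ (mv L) (- (j + 1)).
Proof.
  intros (q & [_ [Hq1 Hq2]] & H) (q' & [_ [Hq1' Hq2']] & H').
  destruct (Rj_succ_yrep j p q H) as [K HK].
  destruct (Rj_succ_yrep j p' q' H') as [K' HK'].
  unfold yrep in HK, HK'.
  eapply Rle_trans; [apply (dS1_le _ _ _ (K - K')), powerRZ_mv_pos|].
  pose proof (level_offset_range j p). pose proof (level_offset_range j p').
  pose proof (level_offset_range j q). pose proof (level_offset_range j q').
  pose proof (powerRZ_mv_pos (- (j + 1))).
  rewrite minus_IZR. apply Rabs_le. split; nra.
Qed.

Lemma ximg_sat (J : option Z) (S : pt -> Prop) (t : R) : ximg (sat L J S) t <-> ximg S t.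
Proof.
  split.
  - intros (p & (q & Hq & HR) & <-). exists q. split; [exact Hq|].
    symmetry. exact (Rj_fst J p q HR).
  - intros (p & Hp & <-). exists p. split; [|reflexivity]. exists p. split; [exact Hp | apply rst_refl].
Qed.

Lemma ximg_closed_cell (j a b : Z) (t : R) : ximg (closed_cell L j a b) t <->
  IZR a * powerRZ mm (- j) <= t <= (IZR a + 1) * powerRZ mm (- j).
Proof.
  pose proof (powerRZ_mv_pos (- j)). split.
  - intros (p & [Hx _] & <-). exact Hx.
  - intro Ht. exists (t, IZR b * powerRZ (mv L) (- j)). repeat split; simpl; lra.
Qed.

Lemma ximg_open_cell (j a b : Z) (t : R) : ximg (open_cell L j a b) t <->
  IZR a * powerRZ mm (- j) < t < (IZR a + 1) * powerRZ mm (- j).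
Proof.
  pose proof (powerRZ_mv_pos (- j)). split.
  - intros (p & [Hx _] & <-). exact Hx.
  - intro Ht. exists (t, (IZR b + / 2) * powerRZ (mv L) (- j)). repeat split; simpl; lra.
Qed.

Lemma ximg_vert_cell (j c b : Z) (t : R) :
  ximg (vert_cell L j c b) t <-> t = IZR c * powerRZ mm (- j).
Proof.
  pose proof (powerRZ_mv_pos (- j)). split.
  - intros (p & [Hx _] & <-). exact Hx.
  - intro Ht. exists (t, IZR b * powerRZ (mv L) (- j)). repeat split; simpl; lra.
Qed.

End Tower.

Theorem mainTheorem6 (L : nat) (HL : (100 <= L)%nat) :
  ((forall (J : option Z) (p q : pt), Rj L J p q -> fst p = fst q) /\
   (forall (j : Z) (p q : pt), Rj L (Some j) p q ->
      eqmod (powerRZ (mv L) (- j)) (snd p) (snd q))) /\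
  (forall j a b : Z, exists u : R,
     (forall t, ximg (sat L (Some j) (closed_cell L j a b)) t <->
                u <= t <= u + powerRZ mm (- j)) /\
     (forall t, ximg (sat L (Some j) (open_cell L j a b)) t <->
                u < t < u + powerRZ mm (- j)) /\
     (forall t, ximg (sat L (Some j) (vert_cell L j a b)) t <-> t = u) /\
     (forall t, ximg (sat L (Some j) (vert_cell L j (a + 1) b)) t <->
                t = u + powerRZ mm (- j))) /\
  (forall (j : Z) (p p' : pt), Rj L (Some (j + 1)%Z) p p' ->
     dS1 (powerRZ (mv L) (- j)) (snd p) (snd p') <= 2 * powerRZ (mv L) (- (j + 1))) /\
  (forall (j a b : Z) (p p' : pt),
     sat L (Some (j + 1)%Z) (open_cell L (j + 1) a b) p ->
     sat L (Some (j + 1)%Z) (open_cell L (j + 1) a b) p' ->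
     dS1 (powerRZ (mv L) (- j)) (snd p) (snd p') <= 5 * powerRZ (mv L) (- (j + 1))).
Proof.
  assert (HL0 : (0 < L)%nat) by lia.
  split; [split | split; [| split]].
  - exact (Rj_fst L).
  - exact (Rj_eqmod L HL0).
  - intros j a b. exists (IZR a * powerRZ mm (- j)).
    split; [| split; [| split]]; intro t;
      rewrite ?(ximg_sat L), ?(ximg_closed_cell L HL0), ?(ximg_open_cell L HL0),
        ?(ximg_vert_cell L HL0), ?plus_IZR; split; lra.
  - exact (Rj_succ_dS1 L HL0).
  - exact (sat_open_cell_dS1 L HL0).
Qed.
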